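(* Let $U\colon\mathcal{E}\to\mathbf{Set}$ be a topological category and $\overline T\colon\mathcal{E}\to\mathcal{E}$ a lifting of a monad $T\colon\mathbf{Set}\to\mathbf{Set}$. Let $(A,a)$ and $(B,b)$ be $\overline T$-algebras and $h\colon A\to B$ a $\overline T$-algebra homomorphism. Then $h^\bullet B$ is a refinement of $(A,a)$.
   Context: Topological category: $U$ such that every family of maps $(f_i\colon Y\to UA_i)$ has a unique $U$-initial lift. Fibre $\mathcal{E}_Y$: objects over $Y$, ordered by $P\sqsubseteq P'$ iff there is a morphism $P\to P'$ over $\mathit{id}_Y$. For an $\mathcal{E}$-morphism $h\colon A\to B$, $h^\bullet B\in\mathcal{E}_{UA}$ is the domain of the $U$-initial lift of the single map $Uh\colon UA\to UB$. $\overline T$ lifts $T$: a monad on $\mathcal{E}$ with $U\overline T=TU$ whose unit and multiplication lie over those of $T$. A conformance $P\in\mathcal{E}_{UA}$ is a refinement of $(A,a)$ if $A\sqsubseteq P$ and $P$ carries a $\overline T$-algebra structure making the identity-carried morphism $A\to P$ an algebra homomorphism. *)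

Set Implicit Arguments.
Unset Strict Implicit.

Definition cast {X Y : Type} (e : X = Y) (x : X) : Y :=
  match e in _ = Z return Z with eq_refl => x end.

Record Category := {
  Ob :> Type;
  Hom : Ob -> Ob -> Type;
  idm : forall A, Hom A A;
  comp : forall A B C, Hom B C -> Hom A B -> Hom A C;
  comp_idl : forall A B (f : Hom A B), comp (idm B) f = f;
  comp_idr : forall A B (f : Hom A B), comp f (idm A) = f;
  comp_assoc : forall A B C D (f : Hom A B) (g : Hom B C) (h : Hom C D),
      comp h (comp g f) = comp (comp h g) f
}.
Arguments Hom {c} _ _.
Arguments idm {c} _.
Arguments comp {c A B C} _ _.

Record SetFunctor (C : Category) := {
  F0 : C -> Type;
  F1 : forall A B : C, Hom A B -> F0 A -> F0 B;
  F1_id : forall (A : C) x, F1 (idm A) x = x;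
  F1_comp : forall (A B D : C) (f : Hom A B) (g : Hom B D) x,
      F1 (comp g f) x = F1 g (F1 f x)
}.
Arguments F0 {C} _ _.
Arguments F1 {C} _ {A B} _ _.

Record SetMonad := {
  T0 : Type -> Type;
  T1 : forall X Y : Type, (X -> Y) -> T0 X -> T0 Y;
  eta : forall X : Type, X -> T0 X;
  mu : forall X : Type, T0 (T0 X) -> T0 X;
  T1_id : forall X (t : T0 X), T1 (fun x => x) t = t;
  T1_comp : forall X Y Z (f : X -> Y) (g : Y -> Z) t,
      T1 (fun x => g (f x)) t = T1 g (T1 f t);
  eta_nat : forall X Y (f : X -> Y) x, T1 f (eta x) = eta (f x);
  mu_nat : forall X Y (f : X -> Y) t, T1 f (mu t) = mu (T1 (T1 f) t);
  mu_eta_l : forall X (t : T0 X), mu (eta t) = t;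
  mu_eta_r : forall X (t : T0 X), mu (T1 (@eta X) t) = t;
  mu_assoc : forall X (t : T0 (T0 (T0 X))), mu (mu t) = mu (T1 (@mu X) t)
}.
Arguments T0 _ _ : clear implicits.
Arguments T1 {s X Y} _ _.
Arguments eta {s X} _.
Arguments mu {s X} _.

Record CMonad (C : Category) := {
  M0 : C -> C;
  M1 : forall A B : C, Hom A B -> Hom (M0 A) (M0 B);
  unit : forall A : C, Hom A (M0 A);
  mult : forall A : C, Hom (M0 (M0 A)) (M0 A);
  M1_id : forall A : C, M1 (idm A) = idm (M0 A);
  M1_comp : forall (A B D : C) (f : Hom A B) (g : Hom B D),
      M1 (comp g f) = comp (M1 g) (M1 f);
  unit_nat : forall (A B : C) (f : Hom A B), comp (M1 f) (unit A) = comp (unit B) f;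
  mult_nat : forall (A B : C) (f : Hom A B),
      comp (M1 f) (mult A) = comp (mult B) (M1 (M1 f));
  mult_unit_l : forall A : C, comp (mult A) (unit (M0 A)) = idm (M0 A);
  mult_unit_r : forall A : C, comp (mult A) (M1 (unit A)) = idm (M0 A);
  mult_assoc : forall A : C, comp (mult A) (mult (M0 A)) = comp (mult A) (M1 (mult A))
}.
Arguments M0 {C} _ _.
Arguments M1 {C} _ {A B} _.
Arguments unit {C} _ _.
Arguments mult {C} _ _.

Record Lifting (C : Category) (U : SetFunctor C) (T : SetMonad) (Tb : CMonad C) := {
  lift_eq : forall X : C, F0 U (M0 Tb X) = T0 T (F0 U X);
  lift_map : forall (X Y : C) (f : Hom X Y) x,
      cast (lift_eq Y) (F1 U (M1 Tb f) x) = T1 (F1 U f) (cast (lift_eq X) x);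
  lift_unit : forall (X : C) x,
      cast (lift_eq X) (F1 U (unit Tb X) x) = eta x;
  lift_mult : forall (X : C) x,
      cast (lift_eq X) (F1 U (mult Tb X) x)
      = mu (T1 (cast (lift_eq X)) (cast (lift_eq (M0 Tb X)) x))
}.

Section Lifts.
Variables (C : Category) (U : SetFunctor C).

(* candidate lift of a U-structured source (f_i : Y -> U A_i)_{i in I}:
   an object X with U X = Y, together with morphisms X -> A_i *)
Definition LiftData (Y : Type) (I : Type) (A : I -> C) : Type :=
  { X : C & ((F0 U X = Y) * (forall i, Hom X (A i)))%type }.

Definition is_lift {Y I} {A : I -> C} (f : forall i, Y -> F0 U (A i))
    (L : LiftData Y A) : Prop :=
  forall i x, F1 U (snd (projT2 L) i) x = f i (cast (fst (projT2 L)) x).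

Definition is_initial {Y I} {A : I -> C} (f : forall i, Y -> F0 U (A i))
    (L : LiftData Y A) : Prop :=
  forall (Z : C) (g : F0 U Z -> Y),
    (forall i, exists k : Hom Z (A i), forall z, F1 U k z = f i (g z)) ->
    exists gb : Hom Z (projT1 L), forall z, cast (fst (projT2 L)) (F1 U gb z) = g z.

Definition is_initial_lift {Y I} {A : I -> C} (f : forall i, Y -> F0 U (A i))
    (L : LiftData Y A) : Prop := is_lift f L /\ is_initial f L.

Record Topological := {
  top_faithful : forall (A B : C) (f g : Hom A B),
      (forall x, F1 U f x = F1 U g x) -> f = g;
  top_lift : forall (Y I : Type) (A : I -> C) (f : forall i, Y -> F0 U (A i)),
      LiftData Y A;
  top_lift_ok : forall (Y I : Type) (A : I -> C) (f : forall i, Y -> F0 U (A i)), is_initial_lift f (top_lift f);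
  top_lift_unique : forall (Y I : Type) (A : I -> C) (f : forall i, Y -> F0 U (A i)) (L : LiftData Y A),
      is_initial_lift f L -> L = top_lift f
}.

Definition Fibre (Y : Type) : Type := { X : C & F0 U X = Y }.

Definition fibre_le {Y} (P P' : Fibre Y) : Prop :=
  exists m : Hom (projT1 P) (projT1 P'),
    forall x, cast (projT2 P') (F1 U m x) = cast (projT2 P) x.

Definition self_fibre (A : C) : Fibre (F0 U A) := existT _ A eq_refl.

(* h^bullet B : domain of the U-initial lift of the single map U h *)
Definition pullback (Top : Topological) {A B : C} (h : Hom A B) : Fibre (F0 U A) :=
  let L := @top_lift Top (F0 U A) Datatypes.unit (fun _ => B) (fun _ => F1 U h) in
  existT _ (projT1 L) (fst (projT2 L)).

Variable Tb : CMonad C.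

Definition is_alg (X : C) (x : Hom (M0 Tb X) X) : Prop :=
  comp x (unit Tb X) = idm X /\ comp x (M1 Tb x) = comp x (mult Tb X).

Definition is_alg_hom (X Y : C) (x : Hom (M0 Tb X) X) (y : Hom (M0 Tb Y) Y)
    (h : Hom X Y) : Prop :=
  comp h x = comp y (M1 Tb h).

Definition refinement (A : C) (a : Hom (M0 Tb A) A) (P : Fibre (F0 U A)) : Prop :=
  fibre_le (self_fibre A) P /\
  exists p : Hom (M0 Tb (projT1 P)) (projT1 P),
    is_alg p /\
    forall m : Hom A (projT1 P),
      (forall x, cast (projT2 P) (F1 U m x) = x) -> is_alg_hom a p m.

End Lifts.

(* Let P = h^•B, with carrier U A and k : P -> B over U h.  Transporting T along
   the lifting, U a . T(id) is a map U(T̄ P) -> U A whose composite with U h is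
   U(b . T̄ k), because h is a homomorphism; initiality of P lifts it to
   p : T̄ P -> P.  As U is faithful and P shares its carrier with A, the algebra
   laws for p and the homomorphism property of the identity-carried A -> P are
   inherited from those of a, and A ⊑ P is initiality applied to h itself. *)

From Stdlib Require Import FunctionalExtensionality.

Lemma castK {X Y : Type} (e : X = Y) (x : X) : cast (eq_sym e) (cast e x) = x.
Proof. now destruct e. Qed.

Lemma cast_symK {X Y : Type} (e : X = Y) (y : Y) : cast e (cast (eq_sym e) y) = y.
Proof. now destruct e. Qed.

Lemma cast_inj {X Y : Type} (e : X = Y) (x y : X) : cast e x = cast e y -> x = y.
Proof. now destruct e. Qed.

Section LiftedCarrierMaps.
Context {C : Category} {U : SetFunctor C} {T : SetMonad} {Tb : CMonad C}.
Variable Lf : Lifting U T Tb.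

Definition Tmap {X Y : C} (f : F0 U X -> F0 U Y) (z : F0 U (M0 Tb X)) : F0 U (M0 Tb Y) :=
  cast (eq_sym (lift_eq Lf Y)) (T1 f (cast (lift_eq Lf X) z)).

Lemma Tmap_F1 {X Y : C} (k : Hom X Y) (z : F0 U (M0 Tb X)) :
  Tmap (F1 U k) z = F1 U (M1 Tb k) z.
Proof. unfold Tmap. now rewrite <- lift_map, castK. Qed.

Lemma Tmap_ext {X Y : C} (f g : F0 U X -> F0 U Y) (z : F0 U (M0 Tb X)) :
  (forall x, f x = g x) -> Tmap f z = Tmap g z.
Proof. intros efg. now rewrite (functional_extensionality f g efg). Qed.

Lemma Tmap_comp {X Y Z : C} (f : F0 U X -> F0 U Y) (g : F0 U Y -> F0 U Z)
    (z : F0 U (M0 Tb X)) :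
  Tmap (fun x => g (f x)) z = Tmap g (Tmap f z).
Proof. unfold Tmap. now rewrite cast_symK, T1_comp. Qed.

Lemma Tmap_unit {X Y : C} (f : F0 U X -> F0 U Y) (x : F0 U X) :
  Tmap f (F1 U (unit Tb X) x) = F1 U (unit Tb Y) (f x).
Proof.
  apply (cast_inj (lift_eq Lf Y)).
  unfold Tmap. now rewrite cast_symK, !lift_unit, eta_nat.
Qed.

Lemma Tmap_mult {X Y : C} (f : F0 U X -> F0 U Y) (z : F0 U (M0 Tb (M0 Tb X))) :
  Tmap f (F1 U (mult Tb X) z) = F1 U (mult Tb Y) (Tmap (Tmap f) z).
Proof.
  apply (cast_inj (lift_eq Lf Y)).
  unfold Tmap at 1. rewrite cast_symK, !lift_mult, mu_nat, <- !T1_comp.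
  f_equal. unfold Tmap. rewrite cast_symK, <- T1_comp. f_equal.
  apply functional_extensionality. intros y. now rewrite cast_symK.
Qed.

End LiftedCarrierMaps.

Section TransportedAlgebra.
Context {C : Category} {U : SetFunctor C} {T : SetMonad} {Tb : CMonad C}.
Variable Lf : Lifting U T Tb.
Hypothesis U_faithful :
  forall (X Y : C) (f g : Hom X Y), (forall x, F1 U f x = F1 U g x) -> f = g.

Context {A P : C} {a : Hom (M0 Tb A) A} {p : Hom (M0 Tb P) P} {j : F0 U P -> F0 U A}.
Hypothesis j_inj : forall x y, j x = j y -> x = y.
Hypothesis j_p : forall z, j (F1 U p z) = F1 U a (Tmap Lf j z).

Lemma Tmap_transported (z : F0 U (M0 Tb (M0 Tb P))) :
  Tmap Lf j (F1 U (M1 Tb p) z) = F1 U (M1 Tb a) (Tmap Lf (Tmap Lf j) z).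
Proof.
  rewrite <- !(Tmap_F1 Lf), <- !Tmap_comp.
  apply Tmap_ext. exact j_p.
Qed.

Lemma is_alg_transported : is_alg a -> is_alg p.
Proof.
  intros [a_unit a_mult].
  split; apply U_faithful; intros z; apply j_inj.
  - rewrite F1_comp, j_p, Tmap_unit, <- F1_comp, a_unit, !F1_id.
    reflexivity.
  - rewrite !F1_comp, !j_p, Tmap_transported, Tmap_mult, <- !F1_comp, a_mult.
    reflexivity.
Qed.

Lemma is_alg_hom_transported {X : C} {x : Hom (M0 Tb X) X} {m : Hom X P} {n : Hom X A} :
  (forall z, j (F1 U m z) = F1 U n z) -> is_alg_hom x a n -> is_alg_hom x p m.
Proof.
  intros j_m n_hom. apply U_faithful; intros z; apply j_inj.
  rewrite !F1_comp, j_m, j_p, <- F1_comp, n_hom, F1_comp.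
  rewrite <- !(Tmap_F1 Lf), <- Tmap_comp.
  f_equal. apply Tmap_ext. intros y. symmetry. apply j_m.
Qed.

End TransportedAlgebra.

Lemma is_alg_hom_id {C : Category} {Tb : CMonad C} {X : C} (x : Hom (M0 Tb X) X) :
  is_alg_hom x x (idm X).
Proof. unfold is_alg_hom. now rewrite M1_id, comp_idl, comp_idr. Qed.

Section Refinements.
Context {C : Category} {U : SetFunctor C} {T : SetMonad} {Tb : CMonad C}.
Variable Lf : Lifting U T Tb.
Hypothesis U_faithful :
  forall (X Y : C) (f g : Hom X Y), (forall x, F1 U f x = F1 U g x) -> f = g.

Lemma refinement_of_transported {A : C} {a : Hom (M0 Tb A) A} {P : Fibre U (F0 U A)}
    {p : Hom (M0 Tb (projT1 P)) (projT1 P)} :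
  is_alg a -> fibre_le (self_fibre U A) P ->
  (forall z, cast (projT2 P) (F1 U p z) = F1 U a (Tmap Lf (cast (projT2 P)) z)) ->
  refinement a P.
Proof.
  intros ha A_le_P j_p. split; [exact A_le_P |].
  exists p. split.
  - exact (is_alg_transported Lf U_faithful (cast_inj (projT2 P)) j_p ha).
  - intros m j_m.
    apply (is_alg_hom_transported Lf U_faithful (cast_inj (projT2 P)) j_p (n := idm A)).
    + intros x. now rewrite j_m, F1_id.
    + apply is_alg_hom_id.
Qed.

End Refinements.

Section Pullback.
Context {C : Category} {U : SetFunctor C} (Top : Topological U).
Context {A B : C}.
Variable h : Hom A B.

Lemma pullback_lift :
  exists k : Hom (projT1 (pullback Top h)) B,
    forall x, F1 U k x = F1 U h (cast (projT2 (pullback Top h)) x).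
Proof.
  destruct (top_lift_ok Top (fun _ : Datatypes.unit => F1 U h)) as [lifted _].
  exists (snd (projT2 (top_lift Top (fun _ : Datatypes.unit => F1 U h))) tt).
  apply lifted.
Qed.

Lemma pullback_initial (Z : C) (g : F0 U Z -> F0 U A) :
  (exists k : Hom Z B, forall z, F1 U k z = F1 U h (g z)) ->
  exists gb : Hom Z (projT1 (pullback Top h)),
    forall z, cast (projT2 (pullback Top h)) (F1 U gb z) = g z.
Proof.
  intros [k hk].
  apply (top_lift_ok Top (fun _ : Datatypes.unit => F1 U h)).
  intros _. now exists k.
Qed.

Lemma self_fibre_le_pullback : fibre_le (self_fibre U A) (pullback Top h).
Proof. apply pullback_initial. now exists h. Qed.

Context {T : SetMonad} {Tb : CMonad C}.
Variable Lf : Lifting U T Tb.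

Lemma pullback_transported_alg {a : Hom (M0 Tb A) A} {b : Hom (M0 Tb B) B} :
  is_alg_hom a b h ->
  exists p : Hom (M0 Tb (projT1 (pullback Top h))) (projT1 (pullback Top h)),
    forall z, cast (projT2 (pullback Top h)) (F1 U p z)
              = F1 U a (Tmap Lf (cast (projT2 (pullback Top h))) z).
Proof.
  intros h_hom. destruct pullback_lift as [k hk].
  apply pullback_initial. exists (comp b (M1 Tb k)). intros z.
  rewrite <- F1_comp, h_hom, !F1_comp, <- !(Tmap_F1 Lf), <- Tmap_comp.
  f_equal. apply Tmap_ext. exact hk.
Qed.

End Pullback.

Theorem lemma3 (C : Category) (U : SetFunctor C) (Top : Topological U)
    (T : SetMonad) (Tb : CMonad C) (Lf : Lifting U T Tb)
    (A B : C) (a : Hom (M0 Tb A) A) (b : Hom (M0 Tb B) B)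
    (ha : is_alg a) (hb : is_alg b)
    (h : Hom A B) (hh : is_alg_hom a b h) :
  refinement a (pullback Top h).
Proof.
  destruct (pullback_transported_alg Top h Lf hh) as [p j_p].
  exact (refinement_of_transported Lf (top_faithful Top) ha
           (self_fibre_le_pullback Top h) j_p).
Qed.
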